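(* Let $F$ be a cumulative distribution function of a nonnegative random variable, let $0<\sigma_1<\sigma_2<\cdots<\sigma_T$ be points (arrivals) on the positive real line, and let $\mathbf p=(p_1,\dots,p_T)\in[0,1]^T$. For every $t\in[T]$, the probability that the unit is available at arrival $\sigma_t$ in the random $(F,\boldsymbol\sigma,\mathbf p)$ process is equal to the fraction of the resource available at arrival $\sigma_t$ in the fluid $(F,\boldsymbol\sigma,\mathbf p)$ process. Consequently, the expected reward $r(F,\boldsymbol\sigma,\mathbf p)$ of the random process equals the total reward of the fluid process.
   Context: Random $(F,\boldsymbol\sigma,\mathbf p)$ process: a single unit of a resource starts at time $0$ in the available state; time moves forward along the real line. If the unit is available just prior to $\sigma_t$, then with probability $p_t$ (independently of everything else) it becomes in-use for a random duration $d$ drawn independently from $F$: it is in use on $(\sigma_t,\sigma_t+d)$ and becomes available again at time $\sigma_t+d$. Each switch from available to in-use earns reward $1$; $r(F,\boldsymbol\sigma,\mathbf p)$ denotes the expected total reward. Fluid $(F,\boldsymbol\sigma,\mathbf p)$ process: a single unit of resource is treated as divisible, with fraction $1$ available at time $0$. If a fraction $\delta_t$ is available when $\sigma_t$ arrives, a fraction $p_t\delta_t$ is consumed at $\sigma_t$, earning reward $p_t\delta_t$; of this consumed amount, exactly a fraction $F(d)$ has returned and is available again by time $\sigma_t+d$, for every $d\ge 0$. *)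

From HB Require Import structures.
From mathcomp Require Import all_boot all_order all_algebra.
From mathcomp Require Import all_classical all_reals all_analysis.
Set Implicit Arguments. Unset Strict Implicit. Unset Printing Implicit Defensive.
Import Order.TTheory GRing.Theory Num.Theory.
Import numFieldNormedType.Exports.
Local Open Scope classical_set_scope.
Local Open Scope ring_scope.

(* Arrivals are indexed 0..n-1 (paper: 1..T). *)

Definition is_cdf_nonneg (R : realType) (F : R -> R) : Prop :=
  [/\ {homo F : x y / x <= y},
      (forall x : R, F y @[y --> x^'+] --> F x),
      (forall x : R, x < 0 -> F x = 0) &
      F x @[x --> +oo] --> (1 : R)].

Section Processes.
Variables (R : realType) (F : R -> R) (sigma p : nat -> R).

(* ---- Random process, on a sample point: coin k says whether arrival k would
   consume the unit if available; dur k is the duration that would be drawn. *)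
Variables (coin : nat -> bool) (dur : nat -> R).

(* time at which the unit is (again) available, after processing arrivals 0..k-1 *)
Fixpoint release_time (k : nat) : R :=
  match k with
  | 0 => 0
  | k'.+1 => let f := release_time k' in
             if (f <= sigma k') && coin k' then sigma k' + dur k' else f
  end.

Definition avail (k : nat) : bool := release_time k <= sigma k.

Definition random_reward (n : nat) : R :=
  \sum_(k < n) (avail k && coin k)%:R.

End Processes.

Section Fluid.
Variables (R : realType) (F : R -> R) (sigma p : nat -> R).

(* fractions available at arrivals 0..k-1:  delta_k = 1 - sum_{s<k} p_s delta_s (1 - F(sigma_k - sigma_s)) *)
Fixpoint fluid_deltas (k : nat) : seq R :=
  match k with
  | 0 => [::]
  | k'.+1 => let ds := fluid_deltas k' in
             rcons ds (1 - \sum_(s < k') p s * nth 0 ds s * (1 - F (sigma k' - sigma s)))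
  end.

Definition fluid_avail (k : nat) : R := nth 0 (fluid_deltas k.+1) k.

Definition fluid_reward (n : nat) : R := \sum_(k < n) p k * fluid_avail k.
End Fluid.

Definition mutually_independent d (T : measurableType d) (R : realType)
  (P : probability T R) (n : nat) (coin : nat -> T -> bool) (dur : nat -> T -> R) : Prop :=
  forall (A : nat -> set bool) (B : nat -> set R),
    (forall i, measurable (B i)) ->
    fine (P (\bigcap_(i in [set i | (i < n)%N])
               ([set w | A i (coin i w)] `&` (dur i @^-1` B i)))) =
    \prod_(i < n) (fine (P [set w | A i (coin i w)]) * fine (P (dur i @^-1` B i))).

From HB Require Import structures.
From mathcomp Require Import all_boot all_order all_algebra.
From mathcomp Require Import all_classical all_reals all_analysis.
From mathcomp Require Import ring.
Set Implicit Arguments. Unset Strict Implicit. Unset Printing Implicit Defensive.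
Import Order.TTheory GRing.Theory Num.Theory.
Import numFieldNormedType.Exports.
Local Open Scope classical_set_scope.
Local Open Scope ring_scope.

(* Write r_m for the time at which the unit is available after arrivals
   0..m-1 have been processed, and a_m(k) = 1 - sum_(s<m) p_s delta_s
   (1 - F(sigma_k - sigma_s)) for the fluid fraction available at sigma_k
   once only the consumptions of arrivals 0..m-1 are accounted for; the fluid
   availability is delta_k = a_k(k).  The key invariant, proved by induction
   on m, is that for every k >= m and every event C depending only on the
   coins and durations of arrivals >= m,
       P(r_m <= sigma_k  and  C) = a_m(k) P(C).
   The induction step splits {r_(m+1) <= sigma_k} as {r_m <= sigma_k} minus
   {r_m <= sigma_m, coin_m, dur_m > sigma_k - sigma_m} and uses independence
   of (coin_m, dur_m) from the later coordinates.  Taking m = k and C the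
   sure event (resp. {coin_k}) gives P(available at sigma_k) = delta_k
   (resp. P(reward at k) = p_k delta_k); summing over k gives the rewards. *)

Section FluidRecursion.
Variables (R : realType) (F : R -> R) (sigma p : nat -> R).

Lemma size_fluid_deltas k : size (fluid_deltas F sigma p k) = k.
Proof. by elim: k => //= k IH; rewrite size_rcons IH. Qed.

Lemma nth_fluid_deltas k s :
  (s < k)%N -> nth 0 (fluid_deltas F sigma p k) s = fluid_avail F sigma p s.
Proof.
elim: k => // k IH; rewrite ltnS leq_eqVlt => /orP [/eqP -> // | lt_sk].
by rewrite /= nth_rcons size_fluid_deltas lt_sk IH.
Qed.

Definition fluid_partial (m k : nat) : R :=
  1 - \sum_(s < m) p s * fluid_avail F sigma p s * (1 - F (sigma k - sigma s)).

Lemma fluid_partial0 k : fluid_partial 0 k = 1.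
Proof. by rewrite /fluid_partial big_ord0 subr0. Qed.

Lemma fluid_partialS m k :
  fluid_partial m.+1 k =
  fluid_partial m k - p m * fluid_avail F sigma p m * (1 - F (sigma k - sigma m)).
Proof. by rewrite /fluid_partial big_ord_recr /= opprD addrA. Qed.

Lemma fluid_availE k : fluid_avail F sigma p k = fluid_partial k k.
Proof.
rewrite /fluid_avail /= nth_rcons size_fluid_deltas ltnn eqxx.
by congr (_ - _); apply: eq_bigr => s _; rewrite nth_fluid_deltas.
Qed.

End FluidRecursion.

Section ReleaseStep.
Variables (R : realType) (sigma : nat -> R) (coin : nat -> bool) (dur : nat -> R).

Local Notation r m := (release_time sigma coin dur m).

Lemma release_timeS_le m k : sigma m < sigma k ->
  (r m.+1 <= sigma k) =
  (r m <= sigma k) && ~~ [&& r m <= sigma m, coin m & sigma k - sigma m < dur m].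
Proof.
move=> lt_mk /=; case: (boolP (r m <= sigma m)) => [free|_]; last by rewrite andbT.
case: (coin m); last by rewrite andbT.
by rewrite (le_trans free (ltW lt_mk)) -leNgt lerBrDl.
Qed.

End ReleaseStep.

Section RandomProcess.
Context d (T : measurableType d) (R : realType) (P : probability T R).
Variables (n : nat) (F : R -> R) (sigma p : nat -> R).
Variables (coin : nat -> T -> bool) (dur : nat -> T -> R).
Hypothesis mcoin : forall i, measurable [set w | coin i w].
Hypothesis mdur : forall i, measurable_fun setT (dur i).

Local Notation r m w := (release_time sigma (coin^~ w) (dur^~ w) m).

Definition prob (X : set T) : R := fine (P X).

Lemma probE X : measurable X -> P X = (prob X)%:E.
Proof. by move=> mX; rewrite fineK //; apply: fin_num_measure. Qed.

Lemma prob_setD X Y : measurable X -> measurable Y -> Y `<=` X ->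
  prob (X `\` Y) = prob X - prob Y.
Proof.
move=> mX mY YX; rewrite /prob measureD //; last first.
  by apply: (le_lt_trans (probability_le1 P mX)); exact: ltey.
by rewrite setIidr // fineB //; exact: fin_num_measure.
Qed.

Lemma measurable_gt (c : R) : measurable [set x : R | c < x].
Proof.
rewrite (_ : [set x | c < x] = `]c, +oo[%classic); first exact: measurable_itv.
by apply/seteqP; split => x /=; rewrite in_itv /= andbT.
Qed.

Lemma measurable_coin i : measurable_fun setT (coin i).
Proof.
apply: (measurable_fun_bool true); rewrite setTI.
by rewrite (_ : _ @^-1` _ = [set w | coin i w]).
Qed.

Lemma measurable_release m : measurable_fun setT (fun w => r m w).
Proof.
elim: m => [|m IH] /=; first exact: measurable_cst.
apply: measurable_fun_ifT; last exact: IH.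
  apply: measurable_and; last exact: measurable_coin.
  by apply: measurable_realfun.measurable_fun_ler => //; exact: measurable_cst.
by apply: measurable_realfun.measurable_funD => //; exact: measurable_cst.
Qed.

Lemma measurable_release_le m c : measurable [set w | r m w <= c].
Proof.
rewrite -[X in measurable X]setTI.
by apply: measurable_fun_le => //; exact: measurable_release.
Qed.

Definition cylinder (A : nat -> set bool) (B : nat -> set R) : set T :=
  \bigcap_(i in [set i | (i < n)%N]) ([set w | A i (coin i w)] `&` (dur i @^-1` B i)).

Lemma measurable_cylinder A B : (forall i, measurable (B i)) ->
  measurable (cylinder A B).
Proof.
move=> mB; apply: fin_bigcap_measurable; first exact: finite_II.
move=> i _; apply: measurableI.
  have mA : measurable (A i) by []. (* every set of booleans is measurable *)
  by have := measurable_coin i measurableT mA; rewrite setTI.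
by have := mdur i measurableT (mB i); rewrite setTI.
Qed.

Lemma cylinderT : cylinder (fun _ => setT) (fun _ => setT) = setT.
Proof. by apply/seteqP; split => w //= _ i _. Qed.

Lemma cylinder_restrict A B m a b : (m < n)%N -> A m = setT -> B m = setT ->
  [set w | a (coin m w)] `&` (dur m @^-1` b) `&` cylinder A B =
  cylinder (fun i => if i == m then a else A i) (fun i => if i == m then b else B i).
Proof.
move=> lt_mn Am Bm; apply/seteqP; split => w /=.
  by move=> [[aw bw] Cw] i /= lt_in; case: eqP => [->|_]; [|exact: Cw].
move=> Cw; split; first by have := Cw m lt_mn; rewrite eqxx.
by move=> i /= lt_in; have := Cw i lt_in; case: eqP => [->|//]; rewrite Am Bm.
Qed.

Definition rewarded (k : nat) : set T :=
  [set w | avail sigma (coin^~ w) (dur^~ w) k] `&` [set w | coin k w].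

Lemma measurable_rewarded k : measurable (rewarded k).
Proof. by apply: measurableI; [exact: measurable_release_le | exact: mcoin]. Qed.

(* Linearity of expectation: the expected reward is the sum over arrivals of
   the probabilities of being rewarded. *)
Lemma expected_random_reward :
  (\int[P]_w (random_reward sigma (coin^~ w) (dur^~ w) n)%:E =
   (\sum_(k < n) prob (rewarded k))%:E)%E.
Proof.
rewrite (eq_integral (fun w => \sum_(k < n) (\1_(rewarded k) w)%:E)); last first.
  move=> w _; rewrite /random_reward -sumEFin; apply: eq_bigr => k _.
  rewrite indicE; congr (_%:R%:E).
  by rewrite /rewarded in_setI; congr andb; apply/idP/idP => [h|/set_mem //]; apply: mem_set.
rewrite ge0_integral_sum //; last first.
  move=> k; apply/measurable_realfun.measurable_EFinP.
  exact/measurable_realfun.measurable_indic/measurable_rewarded.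
rewrite -sumEFin; apply: eq_bigr => k _.
by rewrite integral_indic ?setIT -?probE //; exact: measurable_rewarded.
Qed.

Hypothesis indep : mutually_independent P n coin dur.

Lemma prob_cylinder_restrict A B m a b :
  (m < n)%N -> (forall i, measurable (B i)) -> A m = setT -> B m = setT ->
  measurable b ->
  prob ([set w | a (coin m w)] `&` (dur m @^-1` b) `&` cylinder A B) =
  prob [set w | a (coin m w)] * prob (dur m @^-1` b) * prob (cylinder A B).
Proof.
move=> lt_mn mB Am Bm mb.
have mB' i : measurable (if i == m then b else B i) by case: (i == m).
rewrite cylinder_restrict // /prob /cylinder.
rewrite (indep (fun i => if i == m then a else A i) mB') (indep A mB).
rewrite (bigD1 (Ordinal lt_mn)) //= [in RHS](bigD1 (Ordinal lt_mn)) //= eqxx.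
rewrite Am Bm (_ : [set w | setT (coin m w)] = setT) // preimage_setT.
rewrite probability_setT /= mul1r mulrA; congr (_ * _); first by rewrite mulr1.
apply: eq_bigr => i ne_im; have /negbTE -> // : nat_of_ord i != m.
by apply: contra ne_im => /eqP eq_im; apply/eqP/val_inj.
Qed.

Hypothesis sigma_gt0 : forall i, (i < n)%N -> 0 < sigma i.
Hypothesis sigma_incr : forall i j, (i < j < n)%N -> sigma i < sigma j.
Hypothesis coin_law : forall i, (i < n)%N -> P [set w | coin i w] = (p i)%:E.
Hypothesis dur_law : forall i x, (i < n)%N -> P [set w | dur i w <= x] = (F x)%:E.

Lemma prob_coin i : (i < n)%N -> prob [set w | coin i w] = p i.
Proof. by move=> lt_in; rewrite /prob coin_law. Qed.

Lemma prob_dur_gt i c : (i < n)%N -> prob (dur i @^-1` [set x | c < x]) = 1 - F c.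
Proof.
move=> lt_in; rewrite (_ : _ @^-1` _ = ~` [set w | dur i w <= c]); last first.
  by apply/seteqP; split => w /=; rewrite ltNge => /negP.
rewrite /prob probability_setC ?dur_law //.
by rewrite -[X in measurable X]setTI; apply: measurable_fun_le => //; exact: measurable_cst.
Qed.

Definition busy (m : nat) (t : R) : set T :=
  [set w | coin m w] `&` (dur m @^-1` [set x | t < x]).

Lemma measurable_busy m t : measurable (busy m t).
Proof.
apply: measurableI; first exact: mcoin.
by rewrite -[X in measurable X]setTI; apply: mdur => //; exact: measurable_gt.
Qed.

Lemma prob_release_le_succ m k C : (m < k)%N -> (k < n)%N -> measurable C ->
  prob ([set w | r m.+1 w <= sigma k] `&` C) =
  prob ([set w | r m w <= sigma k] `&` C) -
  prob ([set w | r m w <= sigma m] `&` (busy m (sigma k - sigma m) `&` C)).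
Proof.
move=> lt_mk lt_kn mC; have lt_sigma : sigma m < sigma k by rewrite sigma_incr ?lt_mk.
rewrite -prob_setD; first last.
- move=> w /= [fm [_ Cw]]; split => //; exact: le_trans fm (ltW lt_sigma).
- exact: measurableI (measurable_release_le _ _) (measurableI _ _ (measurable_busy _ _) mC).
- exact: measurableI (measurable_release_le _ _) mC.
congr prob; apply/seteqP; split => w /=; rewrite release_timeS_le //.
  by move=> [/andP[fk /and3P nbusy] Cw]; split => // -[fm [[cw dw] _]]; apply: nbusy.
move=> [[fk Cw] nbusy]; split => //; apply/andP; split => //.
by apply/and3P => -[fm cw dw]; apply: nbusy.
Qed.

Lemma prob_release_le_cylinder m k A B :
  (m <= k)%N -> (k < n)%N -> (forall i, measurable (B i)) ->
  (forall i, (i < m)%N -> A i = setT /\ B i = setT) ->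
  prob ([set w | r m w <= sigma k] `&` cylinder A B) =
  fluid_partial F sigma p m k * prob (cylinder A B).
Proof.
elim: m k A B => [|m IH] k A B le_mk lt_kn mB freeAB.
  rewrite fluid_partial0 mul1r; congr prob; apply/seteqP; split => [w []//|w Cw].
  by split => //=; apply/ltW/sigma_gt0.
have lt_mn : (m < n)%N by exact: ltn_trans le_mk lt_kn.
have [Am Bm] := freeAB m (ltnSn m).
set c := sigma k - sigma m.
have mB' i : measurable (if i == m then [set x | c < x] else B i).
  by case: (i == m) => //; exact: measurable_gt.
rewrite prob_release_le_succ //; last exact: measurable_cylinder.
rewrite IH ?(ltnW le_mk) //; last by move=> i /ltnW; exact: freeAB.
rewrite [busy _ _ `&` _]cylinder_restrict // IH // => [|i lt_im]; last first.
  by rewrite (ltn_eqF lt_im); apply: freeAB; exact: ltnW.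
rewrite -cylinder_restrict // prob_cylinder_restrict //; last exact: measurable_gt.
rewrite prob_coin // prob_dur_gt // fluid_partialS -fluid_availE; ring.
Qed.

Lemma prob_avail t : (t < n)%N ->
  P [set w | avail sigma (coin^~ w) (dur^~ w) t] = (fluid_avail F sigma p t)%:E.
Proof.
move=> lt_tn; rewrite probE; last exact: measurable_release_le.
congr (_%:E).
have := @prob_release_le_cylinder t t (fun _ => setT) (fun _ => setT) (leqnn t) lt_tn
  (fun _ => measurableT) (fun _ _ => conj erefl erefl).
by rewrite cylinderT setIT /prob probability_setT mulr1 -fluid_availE.
Qed.

Lemma prob_rewarded t : (t < n)%N -> prob (rewarded t) = p t * fluid_avail F sigma p t.
Proof.
move=> lt_tn; have coinE : cylinder (fun i => if i == t then [set true] else setT)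
    (fun _ => setT) = [set w | coin t w].
  apply/seteqP; split => w /=; first by move/(_ t lt_tn); rewrite eqxx => -[].
  by move=> cw i _; case: eqP => [->|].
rewrite /rewarded -coinE prob_release_le_cylinder //; last first.
  by move=> i lt_it; rewrite (ltn_eqF lt_it).
by rewrite coinE prob_coin // fluid_availE mulrC.
Qed.

End RandomProcess.

Theorem lemma1 (d : measure_display) (T : measurableType d) (R : realType)
  (P : probability T R) (F : R -> R) (n : nat) (sigma p : nat -> R)
  (coin : nat -> T -> bool) (dur : nat -> T -> R) :
  is_cdf_nonneg F ->
  (forall i, (i < n)%N -> 0 < sigma i) ->
  (forall i j, (i < j < n)%N -> sigma i < sigma j) ->
  (forall i, (i < n)%N -> 0 <= p i <= 1) ->
  (forall i, measurable [set w | coin i w]) ->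
  (forall i, measurable_fun setT (dur i)) ->
  (forall i, (i < n)%N -> P [set w | coin i w] = (p i)%:E) ->
  (forall i x, (i < n)%N -> P [set w | dur i w <= x] = (F x)%:E) ->
  mutually_independent P n coin dur ->
  (forall t, (t < n)%N ->
     P [set w | avail sigma (coin^~ w) (dur^~ w) t] = (fluid_avail F sigma p t)%:E)
  /\
  (\int[P]_w (random_reward sigma (coin^~ w) (dur^~ w) n)%:E
     = (fluid_reward F sigma p n)%:E)%E.
Proof.
(* The cdf property of F and the range of p follow from the laws; unused. *)
move=> _ sigma_gt0 sigma_incr _ mcoin mdur coin_law dur_law indep.
split=> [t lt_tn|].
  exact: (prob_avail mcoin mdur indep sigma_gt0 sigma_incr coin_law dur_law lt_tn).
rewrite (expected_random_reward P n sigma mcoin mdur); congr (_%:E).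
apply: eq_bigr => k _.
exact: (prob_rewarded mcoin mdur indep sigma_gt0 sigma_incr coin_law dur_law (ltn_ord k)).
Qed.
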